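(* Let $B=\bigoplus_{i\in\mathbb{Z}}\mathbb{Z}_2$ and $L_2=B\rtimes\mathbb{Z}$ the lamplighter group (with $\mathbb{Z}=\langle t\rangle$ acting by shifting indices), equipped with a word metric from a finite generating set. There exist quasi-isometries $\Psi:L_2\to L_2$ that coarsely permute the left cosets of $\langle t\rangle$ such that the induced permutation $\psi:B\to B$ is not a generalized affine map.
   Context: Elements of $L_2$ are written $((x_i),k)$ with $((x_i),k)((y_i),\ell)=((x_i+y_{i-k}),k+\ell)$ and $t=(0,1)$. A quasi-isometry $\Psi$ coarsely permutes the left cosets of $\langle t\rangle$ if there are a permutation $\sigma$ of these cosets and $C'\ge0$ with $d_{\mathcal H}(\Psi(g\langle t\rangle),\sigma(g\langle t\rangle))<C'$ for all $g$ ($d_{\mathcal H}$ = Hausdorff distance). The coset $((x_i),k)\langle t\rangle$ is identified with $(x_i)\in B$, giving the induced permutation $\psi$ of $B$. An affine map of $B$ is a map $x\mapsto\varphi(x)+c$ with $\varphi$ a group automorphism of $B$ and $c\in B$; a generalized affine map is a composition of an affine map with a shift $(x_i)\mapsto(x_{i+k})$, $k\in\mathbb{Z}$. *)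

From Stdlib Require Import ZArith Lia.
Open Scope Z_scope.

Definition finsupp (f : Z -> bool) : Prop :=
  exists N : Z, forall i : Z, N < Z.abs i -> f i = false.

Definition B : Type := { f : Z -> bool | finsupp f }.
Definition Bval (x : B) : Z -> bool := proj1_sig x.

Lemma finsupp_zero : finsupp (fun _ => false).
Proof. exists 0; auto. Qed.
Definition Bzero : B := exist _ (fun _ => false) finsupp_zero.

Lemma finsupp_add (f g : Z -> bool) :
  finsupp f -> finsupp g -> finsupp (fun i => xorb (f i) (g i)).
Proof.
  intros [N HN] [M HM]; exists (Z.max N M); intros i Hi.
  rewrite HN, HM; [reflexivity| lia | lia].
Qed.
Definition Badd (x y : B) : B :=
  exist _ (fun i => xorb (Bval x i) (Bval y i))
    (finsupp_add _ _ (proj2_sig x) (proj2_sig y)).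

Lemma finsupp_shift (k : Z) (f : Z -> bool) :
  finsupp f -> finsupp (fun i => f (i + k)).
Proof.
  intros [N HN]; exists (N + Z.abs k); intros i Hi.
  apply HN; lia.
Qed.
Definition Bshift (k : Z) (x : B) : B :=
  exist _ (fun i => Bval x (i + k)) (finsupp_shift k _ (proj2_sig x)).

Lemma finsupp_delta0 : finsupp (fun i => Z.eqb i 0).
Proof. exists 0; intros i Hi; apply Z.eqb_neq; lia. Qed.
Definition Bdelta0 : B := exist _ (fun i => Z.eqb i 0) finsupp_delta0.

(** L_2 = B ⋊ Z, elements ((x_i),k),
    ((x_i),k)((y_i),l) = ((x_i + y_{i-k}), k+l). *)
Definition L2 : Type := (B * Z)%type.
Definition L2mul (g h : L2) : L2 :=
  (Badd (fst g) (Bshift (- snd g) (fst h)), snd g + snd h).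

(** The standard finite generating set {t, a} of L_2 (t = (0,1), a = (δ_0,0)),
    symmetrized: S ∪ S^{-1} = {t, t^{-1}, a}. *)
Definition gen (s : L2) : Prop :=
  s = (Bzero, 1) \/ s = (Bzero, -1) \/ s = (Bdelta0, 0).

(** dist_le g h n  <->  d_S(g,h) <= n for the (left-invariant) word metric
    d_S(g,h) = |g^{-1} h|_S. *)
Inductive dist_le : L2 -> L2 -> nat -> Prop :=
| dist_le_refl (g : L2) (n : nat) : dist_le g g n
| dist_le_step (g h s : L2) (n : nat) :
    gen s -> dist_le (L2mul g s) h n -> dist_le g h (S n).

(** Quasi-isometry L_2 -> L_2 (constants may be taken natural w.l.o.g. since
    the metric is integer valued). *)
Definition quasi_isometry (Psi : L2 -> L2) : Prop :=
  exists K C : nat,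
    (forall g h n, dist_le g h n -> dist_le (Psi g) (Psi h) (K * n + C)) /\
    (forall g h n, dist_le (Psi g) (Psi h) n -> dist_le g h (K * n + C)) /\
    (forall h, exists g, dist_le (Psi g) h C).

Definition hausdorff_le (A A' : L2 -> Prop) (C : nat) : Prop :=
  (forall a, A a -> exists b, A' b /\ dist_le a b C) /\
  (forall b, A' b -> exists a, A a /\ dist_le a b C).

Definition tcoset (g : L2) : L2 -> Prop :=
  fun h => exists m : Z, h = L2mul g (Bzero, m).
Definition image (Psi : L2 -> L2) (A : L2 -> Prop) : L2 -> Prop :=
  fun h => exists g, A g /\ h = Psi g.

(** The coset ((x_i),k)<t> is identified with (x_i) ∈ B; its representative
    is (x, 0). *)
Definition bijective {X Y : Type} (f : X -> Y) : Prop :=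
  exists g : Y -> X, (forall x, g (f x) = x) /\ (forall y, f (g y) = y).

Definition coarsely_permutes_cosets (Psi : L2 -> L2) (psi : B -> B) : Prop :=
  bijective psi /\
  exists C : nat, forall x : B,
    hausdorff_le (image Psi (tcoset (x, 0))) (tcoset (psi x, 0)) C.

Definition group_automorphism (phi : B -> B) : Prop :=
  (forall x y, phi (Badd x y) = Badd (phi x) (phi y)) /\ bijective phi.

Definition affine_map (f : B -> B) : Prop :=
  exists (phi : B -> B) (c : B), group_automorphism phi /\
    forall x, f x = Badd (phi x) c.

Definition generalized_affine (f : B -> B) : Prop :=
  exists (g : B -> B) (k : Z), affine_map g /\
    ((forall x, f x = Bshift k (g x)) \/ (forall x, f x = g (Bshift k x))).

(* Let psi toggle lamp 0 of x by the product x_1 x_2, and Psi (x, k) := (psi x, k).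
   Psi maps the coset (x, 0)<t> = {(x, m)} exactly onto the coset of psi x.  Toggling
   lamp k changes psi x in lamp k and, only when k is 1 or 2, also in lamp 0, so a
   generator step moves Psi by at most 6; as Psi is an involution it is a
   quasi-isometry.  But psi is quadratic over Z/2: its second difference
   f x + f y + f (x + y) + f 0 is nonzero at (delta 1, delta 2), whereas it vanishes
   for every generalized affine map. *)

From Stdlib Require Import ZArith Lia ProofIrrelevance FunctionalExtensionality.
Open Scope Z_scope.

Lemma B_ext (x y : B) : (forall i, Bval x i = Bval y i) -> x = y.
Proof.
  destruct x as [f fP], y as [g gP]; cbn; intros Efg.
  assert (f = g) as <- by (apply functional_extensionality; exact Efg).
  f_equal; apply proof_irrelevance.
Qed.

Definition Btoggle (x : B) (j : Z) : B := Badd x (Bshift (- j) Bdelta0).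

Lemma Bval_toggle (x : B) (j i : Z) : Bval (Btoggle x j) i = xorb (Bval x i) (i =? j).
Proof.
  cbn; f_equal; destruct (Z.eqb_spec (i + - j) 0), (Z.eqb_spec i j); lia || reflexivity.
Qed.

Ltac bool_cases :=
  repeat match goal with |- context [Z.eqb ?a ?b] => destruct (Z.eqb_spec a b) end;
  try lia; subst;
  repeat match goal with H : Bval ?x ?j = _ |- context [Bval ?x ?j] => rewrite H end;
  repeat match goal with |- context [Bval ?x ?j] => destruct (Bval x j) end;
  reflexivity.

Lemma Badd_shift_zero (x : B) (j : Z) : Badd x (Bshift j Bzero) = x.
Proof. apply B_ext; intros i; cbn; apply Bool.xorb_false_r. Qed.

Lemma L2mul_tpow (x : B) (k m : Z) : L2mul (x, k) (Bzero, m) = (x, k + m).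
Proof. unfold L2mul; cbn; rewrite Badd_shift_zero; reflexivity. Qed.

Lemma L2mul_lamp (x : B) (k : Z) : L2mul (x, k) (Bdelta0, 0) = (Btoggle x k, k).
Proof. unfold L2mul; cbn; rewrite Z.add_0_r; reflexivity. Qed.

Lemma dist_le_mono (g h : L2) (n m : nat) : dist_le g h n -> (n <= m)%nat -> dist_le g h m.
Proof.
  intros Hgh; revert m; induction Hgh as [|g h s n Hs _ IH]; intros m Hnm.
  - constructor.
  - destruct m as [|m]; [lia|]. apply dist_le_step with s; [exact Hs|]. apply IH; lia.
Qed.

Lemma dist_le_trans (g h f : L2) (n m : nat) :
  dist_le g h n -> dist_le h f m -> dist_le g f (n + m).
Proof.
  induction 1 as [g n|g h s n Hs _ IH]; intros Hhk.
  - apply dist_le_mono with m; [exact Hhk | lia].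
  - apply dist_le_step with s; auto.
Qed.

Lemma dist_le_gen (g s : L2) : gen s -> dist_le g (L2mul g s) 1.
Proof. intros Hs; apply dist_le_step with s; [exact Hs | constructor]. Qed.

Lemma dist_le_toggle_here (y : B) (k : Z) : dist_le (y, k) (Btoggle y k, k) 1.
Proof. rewrite <- L2mul_lamp; apply dist_le_gen; right; right; reflexivity. Qed.

Lemma dist_le_walk (y : B) (k k' : Z) : dist_le (y, k) (y, k') (Z.abs_nat (k' - k)).
Proof.
  assert (walk : forall (n : nat) (l : Z),
    dist_le (y, l) (y, l + Z.of_nat n) n /\ dist_le (y, l) (y, l - Z.of_nat n) n).
  { induction n as [|n IH]; intros l.
    - rewrite Z.add_0_r, Z.sub_0_r; split; constructor.
    - rewrite Nat2Z.inj_succ; split.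
      + replace (l + Z.succ (Z.of_nat n)) with (l + 1 + Z.of_nat n) by lia.
        apply (dist_le_trans _ (y, l + 1) _ 1 n); [|apply IH].
        rewrite <- L2mul_tpow; apply dist_le_gen; left; reflexivity.
      + replace (l - Z.succ (Z.of_nat n)) with (l + -1 - Z.of_nat n) by lia.
        apply (dist_le_trans _ (y, l + -1) _ 1 n); [|apply IH].
        rewrite <- L2mul_tpow; apply dist_le_gen; right; left; reflexivity. }
  destruct (walk (Z.abs_nat (k' - k)) k) as [up down].
  destruct (Z.le_ge_cases k k').
  - replace (k + _) with k' in up by lia; exact up.
  - replace (k - _) with k' in down by lia; exact down.
Qed.

Lemma dist_le_toggle (y : B) (k j : Z) :
  dist_le (y, k) (Btoggle y j, k) (2 * Z.abs_nat (j - k) + 1).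
Proof.
  apply dist_le_mono with (Z.abs_nat (j - k) + (1 + Z.abs_nat (k - j)))%nat; [|lia].
  apply dist_le_trans with (y, j); [apply dist_le_walk|].
  apply dist_le_trans with (Btoggle y j, j); [apply dist_le_toggle_here | apply dist_le_walk].
Qed.

Lemma dist_le_lipschitz (F : L2 -> L2) (c : nat) :
  (forall g s, gen s -> dist_le (F g) (F (L2mul g s)) c) ->
  forall g h n, dist_le g h n -> dist_le (F g) (F h) (c * n).
Proof.
  intros Fstep g h n Hgh; induction Hgh as [|g h s n Hs _ IH]; [constructor|].
  replace (c * S n)%nat with (c + c * n)%nat by lia.
  apply dist_le_trans with (F (L2mul g s)); auto.
Qed.

Lemma involutive_quasi_isometry (F : L2 -> L2) (c : nat) :
  (forall g, F (F g) = g) ->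
  (forall g s, gen s -> dist_le (F g) (F (L2mul g s)) c) ->
  quasi_isometry F.
Proof.
  intros FF Fstep; exists c, 0%nat; split; [|split].
  - intros g h n Hgh; rewrite Nat.add_0_r; exact (dist_le_lipschitz F c Fstep g h n Hgh).
  - intros g h n Hgh; rewrite Nat.add_0_r, <- (FF g), <- (FF h).
    exact (dist_le_lipschitz F c Fstep _ _ n Hgh).
  - intros h; exists (F h); rewrite FF; constructor.
Qed.

Lemma tcoset_zero (x : B) (h : L2) : tcoset (x, 0) h <-> exists m, h = (x, m).
Proof. unfold tcoset; setoid_rewrite L2mul_tpow; reflexivity. Qed.

Lemma fiberwise_coarsely_permutes_cosets (psi : B -> B) :
  bijective psi -> coarsely_permutes_cosets (fun g => (psi (fst g), snd g)) psi.
Proof.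
  intros psi_bij; split; [exact psi_bij|]; exists 0%nat; intros x; split.
  - intros a [g [[m ->]%tcoset_zero ->]].
    exists (psi x, m); split; [apply tcoset_zero; eauto | constructor].
  - intros b [m ->]%tcoset_zero.
    exists (psi x, m); split; [|constructor].
    exists (x, m); split; [apply tcoset_zero; eauto | reflexivity].
Qed.

Definition second_difference (f : B -> B) (x y : B) : B :=
  Badd (Badd (f x) (f y)) (Badd (f (Badd x y)) (f Bzero)).

Lemma additive_zero (phi : B -> B) :
  (forall x y, phi (Badd x y) = Badd (phi x) (phi y)) -> phi Bzero = Bzero.
Proof.
  intros phiD; apply B_ext; intros i.
  assert (Badd Bzero Bzero = Bzero) as zz by (apply B_ext; reflexivity).
  pose proof (f_equal (fun z => Bval z i) (phiD Bzero Bzero)) as E; cbn in E.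
  rewrite zz in E; cbn; destruct (Bval (phi Bzero) i); easy.
Qed.

Lemma affine_second_difference (f : B -> B) :
  affine_map f -> forall x y, second_difference f x y = Bzero.
Proof.
  intros [phi [c [[phiD _] fE]]] x y; unfold second_difference.
  rewrite !fE, phiD, (additive_zero phi phiD).
  apply B_ext; intros i; cbn; bool_cases.
Qed.

Lemma generalized_affine_second_difference (f : B -> B) :
  generalized_affine f -> forall x y, second_difference f x y = Bzero.
Proof.
  intros [g [k [g_aff [fE | fE]]]] x y.
  - transitivity (Bshift k (second_difference g x y)).
    + unfold second_difference; rewrite !fE; apply B_ext; reflexivity.
    + rewrite affine_second_difference by exact g_aff; apply B_ext; reflexivity.
  - rewrite <- (affine_second_difference g g_aff (Bshift k x) (Bshift k y)).
    unfold second_difference; rewrite !fE; do 3 f_equal; apply B_ext; reflexivity.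
Qed.

Lemma finsupp_psi (x : B) :
  finsupp (fun i => if i =? 0 then xorb (Bval x 0) (Bval x 1 && Bval x 2) else Bval x i).
Proof.
  destruct (proj2_sig x) as [N HN]; exists (Z.max N 0); intros i Hi.
  destruct (Z.eqb_spec i 0); [lia | apply HN; lia].
Qed.

Definition psi (x : B) : B := exist _ _ (finsupp_psi x).
Definition Psi (g : L2) : L2 := (psi (fst g), snd g).

Ltac lamp_ext :=
  apply B_ext; intros ?i;
  repeat (first [rewrite Bval_toggle | progress cbn [psi Bval proj1_sig]]);
  bool_cases.

Lemma psi_involutive (x : B) : psi (psi x) = x.
Proof. lamp_ext. Qed.

Lemma Psi_involutive (g : L2) : Psi (Psi g) = g.
Proof. destruct g; unfold Psi; cbn; rewrite psi_involutive; reflexivity. Qed.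

Lemma psi_toggle (x : B) (k : Z) :
  psi (Btoggle x k) = Btoggle (psi x) k \/
  ((k = 1 \/ k = 2) /\ psi (Btoggle x k) = Btoggle (Btoggle (psi x) k) 0).
Proof.
  destruct (Z.eq_dec k 1) as [->|k1]; [|destruct (Z.eq_dec k 2) as [->|k2]].
  - destruct (Bval x 2) eqn:x2; [right; split; [now left|] | left]; lamp_ext.
  - destruct (Bval x 1) eqn:x1; [right; split; [now right|] | left]; lamp_ext.
  - left; lamp_ext.
Qed.

Lemma Psi_step (g s : L2) : gen s -> dist_le (Psi g) (Psi (L2mul g s)) 6.
Proof.
  destruct g as [x k]; intros [-> | [-> | ->]]; rewrite ?L2mul_tpow, ?L2mul_lamp; unfold Psi; cbn.
  - apply dist_le_mono with (Z.abs_nat (k + 1 - k)); [apply dist_le_walk | lia].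
  - apply dist_le_mono with (Z.abs_nat (k + -1 - k)); [apply dist_le_walk | lia].
  - destruct (psi_toggle x k) as [-> | [k12 ->]].
    + apply dist_le_mono with 1%nat; [apply dist_le_toggle_here | lia].
    + apply dist_le_mono with (1 + (2 * Z.abs_nat (0 - k) + 1))%nat; [|lia].
      apply dist_le_trans with (Btoggle (psi x) k, k);
        [apply dist_le_toggle_here | apply dist_le_toggle].
Qed.

Definition delta (j : Z) : B := Btoggle Bzero j.

Lemma psi_second_difference : second_difference psi (delta 1) (delta 2) <> Bzero.
Proof. intros E; discriminate (f_equal (fun z => Bval z 0) E). Qed.

Theorem theorem1p2 :
  exists (Psi : L2 -> L2) (psi : B -> B),
    quasi_isometry Psi /\ coarsely_permutes_cosets Psi psi /\
    ~ generalized_affine psi.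
Proof.
  exists Psi, psi; split; [|split].
  - exact (involutive_quasi_isometry Psi 6 Psi_involutive Psi_step).
  - apply fiberwise_coarsely_permutes_cosets.
    exists psi; split; exact psi_involutive.
  - intros psi_aff; apply psi_second_difference.
    exact (generalized_affine_second_difference psi psi_aff _ _).
Qed.
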